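(* Let $U\subset \mathbb R^n$ and $V\subset \mathbb R^m$ be open and let $f:U\times V\to \mathbb R$ be upper-semicontinuous and bounded. Suppose $f$ is $\kappa$-semiconcave for some $\kappa>0$, i.e. $(x,y)\mapsto f(x,y)-\frac\kappa2(\|x\|^2+\|y\|^2)$ is concave. Then for every $0<\epsilon<\kappa^{-1}$ and every fixed $x\in U$, the function $y\mapsto f^{\epsilon,p}(x,y)-\frac{\kappa}{2} \|y\|^2$ is concave on $V$, where $f^{\epsilon,p}(x,y)= \sup_{z\in U} \{ f(z,y) - \frac{1}{2\epsilon} \| z-x\|^2\}$. *)

From HB Require Import structures.
From mathcomp Require Import all_boot all_order all_algebra.
From mathcomp Require Import boolp classical_sets reals.
Set Implicit Arguments. Unset Strict Implicit. Unset Printing Implicit Defensive.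
Import Order.TTheory GRing.Theory Num.Theory.
Local Open Scope ring_scope.
Local Open Scope classical_set_scope.

Section Defs.
Variable R : realType.

Definition sqnorm (n : nat) (x : 'rV[R]_n) : R := \sum_(i < n) (x ord0 i) ^+ 2.

Definition enorm (n : nat) (x : 'rV[R]_n) : R := Num.sqrt (sqnorm x).

Definition eopen (n : nat) (U : set 'rV[R]_n) : Prop :=
  forall x, U x -> exists2 r : R, 0 < r & forall z, enorm (z - x) < r -> U z.

Definition usc_on2 (n m : nat) (U : set 'rV[R]_n) (V : set 'rV[R]_m)
    (f : 'rV[R]_n -> 'rV[R]_m -> R) : Prop :=
  forall x y, U x -> V y -> forall e : R, 0 < e ->
    exists2 d : R, 0 < d & forall z w, U z -> V w ->
      sqnorm (z - x) + sqnorm (w - y) < d ^+ 2 -> f z w < f x y + e.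

Definition bounded_on2 (n m : nat) (U : set 'rV[R]_n) (V : set 'rV[R]_m)
    (f : 'rV[R]_n -> 'rV[R]_m -> R) : Prop :=
  exists M : R, forall z w, U z -> V w -> `|f z w| <= M.

(* concavity of a real function on a set D (standard convention: the domain is
   convex, i.e. closed under convex combinations, and the concavity inequality holds) *)
Definition concave_on (n : nat) (D : set 'rV[R]_n) (g : 'rV[R]_n -> R) : Prop :=
  forall a b, D a -> D b -> forall t : R, 0 <= t -> t <= 1 ->
    D (t *: a + (1 - t) *: b) /\
    t * g a + (1 - t) * g b <= g (t *: a + (1 - t) *: b).

Definition concave_on2 (n m : nat) (U : set 'rV[R]_n) (V : set 'rV[R]_m)
    (g : 'rV[R]_n -> 'rV[R]_m -> R) : Prop :=
  forall a1 a2 b1 b2, U a1 -> V a2 -> U b1 -> V b2 ->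
    forall t : R, 0 <= t -> t <= 1 ->
    U (t *: a1 + (1 - t) *: b1) /\ V (t *: a2 + (1 - t) *: b2) /\
    t * g a1 a2 + (1 - t) * g b1 b2
      <= g (t *: a1 + (1 - t) *: b1) (t *: a2 + (1 - t) *: b2).

Definition sup_conv (n m : nat) (U : set 'rV[R]_n) (f : 'rV[R]_n -> 'rV[R]_m -> R)
    (eps : R) (x : 'rV[R]_n) (y : 'rV[R]_m) : R :=
  sup [set f z y - (2 * eps)^-1 * sqnorm (z - x) | z in U].

End Defs.

From HB Require Import structures.
From mathcomp Require Import all_boot all_order all_algebra.
From mathcomp Require Import boolp classical_sets reals.
From mathcomp Require Import ring lra.
Set Implicit Arguments. Unset Strict Implicit. Unset Printing Implicit Defensive.
Import Order.TTheory GRing.Theory Num.Theory.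
Local Open Scope ring_scope.
Local Open Scope classical_set_scope.

(* Since 1/(2 eps) >= kappa/2, the function
     (z, y) |-> f(z, y) - |z - x|^2/(2 eps) - kappa/2 |y|^2
   is the semiconcave normalisation f(z, y) - kappa/2 (|z|^2 + |y|^2) plus
   z |-> kappa/2 |z|^2 - |z - x|^2/(2 eps), which is concave (its quadratic part
   has coefficient kappa/2 - 1/(2 eps) <= 0); hence it is jointly concave.
   Taking the supremum of a jointly concave function over z, which is finite by
   boundedness of f, gives a concave function of y. *)

Section ConcaveSup.
Variables (R : realType) (n m : nat).
Implicit Types (U : set 'rV[R]_n) (V : set 'rV[R]_m).

Lemma sqnorm_ge0 (u : 'rV[R]_n) : 0 <= sqnorm u.
Proof. by apply: sumr_ge0 => i _; rewrite sqr_ge0. Qed.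

Lemma convex_comb_sqnormB (u v x : 'rV[R]_n) (t : R) :
  t * sqnorm (u - x) + (1 - t) * sqnorm (v - x)
  = sqnorm (t *: u + (1 - t) *: v - x) + t * (1 - t) * sqnorm (u - v).
Proof.
rewrite /sqnorm !mulr_sumr -!big_split; apply: eq_bigr => i _ /=.
by rewrite !mxE; ring.
Qed.

Lemma concave_on_sqnorm_penalty (x : 'rV[R]_n) (k i : R) : k <= i ->
  concave_on setT (fun z => k * sqnorm z - i * sqnorm (z - x)).
Proof.
move=> le_ki u v _ _ t t0 t1; split=> //.
have E0 := convex_comb_sqnormB u v 0 t; rewrite !subr0 in E0.
have Ex := convex_comb_sqnormB u v x t.
set w := t *: u + (1 - t) *: v in E0 Ex *.
set P := t * (1 - t) * sqnorm (u - v) in E0 Ex.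
have P0 : 0 <= P by rewrite !mulr_ge0 ?sqnorm_ge0 ?subr_ge0.
have kP : k * P <= i * P by rewrite ler_wpM2r.
have := congr1 ( *%R k) E0; have := congr1 ( *%R i) Ex.
clearbody w P; lra.
Qed.

Lemma concave_on2Dl U V (g : 'rV[R]_n -> 'rV[R]_m -> R) (h : 'rV[R]_n -> R) :
  concave_on2 U V g -> concave_on setT h ->
  concave_on2 U V (fun z y => g z y + h z).
Proof.
move=> cg ch a1 a2 b1 b2 Ua1 Va2 Ub1 Vb2 t t0 t1.
have [Uc [Vc le_g]] := cg a1 a2 b1 b2 Ua1 Va2 Ub1 Vb2 t t0 t1.
have [_ le_h] := ch a1 b1 I I t t0 t1.
by do 2!split=> //; lra.
Qed.

Lemma has_sup_penalty U V (f : 'rV[R]_n -> 'rV[R]_m -> R) (i : R) x y :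
  bounded_on2 U V f -> 0 <= i -> U x -> V y ->
  has_sup [set f z y - i * sqnorm (z - x) | z in U].
Proof.
move=> [M fM] i0 Ux Vy; split; first by exists (f x y - i * sqnorm (x - x)), x.
exists M => _ [z Uz <-].
have := ler_norm (f z y); have := fM z y Uz Vy.
have : 0 <= i * sqnorm (z - x) by rewrite mulr_ge0 ?sqnorm_ge0.
lra.
Qed.

Lemma concave_on_supB U V (G : 'rV[R]_n -> 'rV[R]_m -> R) (h : 'rV[R]_m -> R) :
  concave_on2 U V (fun z y => G z y - h y) ->
  (forall y, V y -> has_sup [set G z y | z in U]) ->
  concave_on V (fun y => sup [set G z y | z in U] - h y).
Proof.
move=> cG supG a b Va Vb t t0 t1.
have [[_ [z0 Uz0 _]] _] := supG a Va.
have [_ [Vc _]] := cG z0 a z0 b Uz0 Va Uz0 Vb t t0 t1.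
split=> //; set c := t *: a + (1 - t) *: b.
apply/ler_addgt0Pr => e e0.
have [_ [z1 Uz1 <-] G1] := sup_adherent e0 (supG a Va).
have [_ [z2 Uz2 <-] G2] := sup_adherent e0 (supG b Vb).
have [Uz [_ le_G]] := cG z1 a z2 b Uz1 Va Uz2 Vb t t0 t1.
have le_sup : G (t *: z1 + (1 - t) *: z2) c <= sup [set G z c | z in U].
  by apply: sup_upper_bound; [exact: supG | exists (t *: z1 + (1 - t) *: z2)].
have le1 : t * (sup [set G z a | z in U] - e) <= t * G z1 a.
  by rewrite ler_wpM2l // ltW.
have le2 : (1 - t) * (sup [set G z b | z in U] - e) <= (1 - t) * G z2 b.
  by rewrite ler_wpM2l ?subr_ge0 // ltW.
move: le_G le_sup le1 le2 => /=.
set Sa := sup _; set Sb := sup _; set Sc := sup _; lra.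
Qed.

End ConcaveSup.

Theorem lemma4p3 (R : realType) (n m : nat) (U : set 'rV[R]_n) (V : set 'rV[R]_m)
    (f : 'rV[R]_n -> 'rV[R]_m -> R) (kappa : R) :
  eopen U -> eopen V ->
  usc_on2 U V f -> bounded_on2 U V f ->
  0 < kappa ->
  concave_on2 U V (fun x y => f x y - kappa / 2 * (sqnorm x + sqnorm y)) ->
  forall eps : R, 0 < eps -> eps < kappa^-1 ->
  forall x : 'rV[R]_n, U x ->
    concave_on V (fun y => sup_conv U f eps x y - kappa / 2 * sqnorm y).
Proof.
move=> _ _ _ f_bounded kappa0 f_semiconcave eps eps0 eps_lt x Ux.
set k := kappa / 2; set i := (2 * eps)^-1.
have i0 : 0 <= i by rewrite invr_ge0; lra.
have le_ki : k <= i.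
  have : kappa < eps^-1 by rewrite -(invrK kappa) ltf_pV2 ?posrE ?invr_gt0.
  by rewrite /k /i invfM; lra.
apply: (concave_on_supB (G := fun z y => f z y - i * sqnorm (z - x))); last first.
  by move=> y; exact: has_sup_penalty f_bounded i0 Ux.
have := concave_on2Dl f_semiconcave (concave_on_sqnorm_penalty x le_ki).
congr concave_on2; apply/funext => z; apply/funext => y; rewrite /k; ring.
Qed.
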